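(* Let $V$ be a symmetric B-DMC, and suppose that for a given $N=2^n$ ($n\ge0$) and $i\in\{1,\dots,N\}$, $$\mathbb P_V\big[L_{V_N^{(i)}}(y_1^N)<1\big]\ge\mathbb P_V\big[L_{V_N^{(i)}}(y_1^N)>1\big].$$ Then for $j=2i-1$ and $j=2i$, $$\mathbb P_V\big[L_{V_{2N}^{(j)}}(y_1^{2N})<1\big]\ge\mathbb P_V\big[L_{V_{2N}^{(j)}}(y_1^{2N})>1\big].$$
   Context: A B-DMC $V:\{0,1\}\to\mathcal Y$ is given by transition probabilities $V(y|x)$, $\mathcal Y$ finite; $L_V(y)=V(y|1)/V(y|0)$. $V$ is symmetric if there is an involutive permutation $\pi$ of $\mathcal Y$ with $V(y|1)=V(\pi(y)|0)$ for all $y$. For a B-DMC $V$: $V^-(y_1y_2|u_1)=\sum_{u_2}\tfrac12V(y_1|u_1\oplus u_2)V(y_2|u_2)$, $V^+(y_1y_2u_1|u_2)=\tfrac12V(y_1|u_1\oplus u_2)V(y_2|u_2)$. Synthetic channels: $V_1^{(1)}=V$, $V_{2N}^{(2i-1)}=(V_N^{(i)})^-$, $V_{2N}^{(2i)}=(V_N^{(i)})^+$; an output of $V_N^{(i)}$ is written $(y_1^N,u_1^{i-1})$ as in Arıkan's construction and $L_{V_N^{(i)}}(y_1^N):=L_{V_N^{(i)}}(y_1^N,0_1^{i-1})$. With $L_1=L_{V_N^{(i)}}(y_1^N)$, $L_2=L_{V_N^{(i)}}(y_{N+1}^{2N})$: $L_{V_{2N}^{(2i-1)}}(y_1^{2N})=\frac{L_1+L_2}{1+L_1L_2}$,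 $L_{V_{2N}^{(2i)}}(y_1^{2N})=L_1L_2$. Notation: $V(y_1^N|0_1^N)=\prod_jV(y_j|0)$, $\mathbb P_V[E]=\sum_{y_1^N}V(y_1^N|0_1^N)\mathbf 1\{E\}$. *)

From HB Require Import structures.
From mathcomp Require Import all_boot all_order all_algebra.
Set Implicit Arguments. Unset Strict Implicit. Unset Printing Implicit Defensive.
Import Order.TTheory GRing.Theory Num.Theory.
Local Open Scope ring_scope.

(* A binary-input channel W : bool -> T -> R, W x t = W(t | x). *)
Definition chan (R : Type) (T : Type) := bool -> T -> R.

Section Channels.
Variable R : realFieldType.

Definition minus_chan (T : Type) (W : chan R T) : chan R (T * T) :=
  fun u1 t => \sum_(u2 : bool) 2^-1 * W (addb u1 u2) t.1 * W u2 t.2.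

(* V^+(t1 t2 u1 | u2) = 1/2 V(t1 | u1 xor u2) V(t2 | u2) *)
Definition plus_chan (T : Type) (W : chan R T) : chan R (T * T * bool) :=
  fun u2 t => 2^-1 * W (addb t.2 u2) t.1.1 * W u2 t.1.2.

Definition LRc (T : Type) (W : chan R T) (t : T) : R := W true t / W false t.
End Channels.

(* Output type of the synthetic channel V_{2^n}^{(k+1)} (0-based index k). *)
Fixpoint outT (Y : Type) (n k : nat) : Type :=
  match n with
  | 0 => Y
  | n'.+1 => if odd k then (outT Y n' k./2 * outT Y n' k./2 * bool)%type
             else (outT Y n' k./2 * outT Y n' k./2)%type
  end.

(* synth V n k = V_{2^n}^{(k+1)}, with V_{2N}^{(2i-1)} = (V_N^{(i)})^-,
   V_{2N}^{(2i)} = (V_N^{(i)})^+. *)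
Fixpoint synth (R : realFieldType) (Y : Type) (V : chan R Y) (n k : nat)
  : chan R (outT Y n k) :=
  match n return chan R (outT Y n k) with
  | 0 => V
  | n'.+1 =>
    if odd k as b return
       chan R (if b then (outT Y n' k./2 * outT Y n' k./2 * bool)%type
               else (outT Y n' k./2 * outT Y n' k./2)%type)
    then plus_chan (@synth R Y V n' k./2) else minus_chan (@synth R Y V n' k./2)
  end.

Arguments synth {R Y} V n k.

Lemma exp2_lo n : (2 ^ n <= 2 ^ n.+1)%N.
Proof. by rewrite expnS leq_pmull // expn_gt0. Qed.

Lemma exp2_hi n (t : 'I_(2 ^ n)) : (t + 2 ^ n < 2 ^ n.+1)%N.
Proof. by rewrite expnS mul2n -addnn ltn_add2r. Qed.

Definition lo_ord n (t : 'I_(2 ^ n)) : 'I_(2 ^ n.+1) := widen_ord (exp2_lo n) t.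
Definition hi_ord n (t : 'I_(2 ^ n)) : 'I_(2 ^ n.+1) := Ordinal (exp2_hi t).

(* The output (y_1^N, 0_1^{i-1}) of V_N^{(i)}: first half of y feeds the
   first copy, second half the second copy; all u's are 0 (= false). *)
Fixpoint mkout (Y : Type) (n k : nat) : ('I_(2 ^ n) -> Y) -> outT Y n k :=
  match n return ('I_(2 ^ n) -> Y) -> outT Y n k with
  | 0 => fun y => y ord0
  | n'.+1 => fun y =>
    let a := @mkout Y n' k./2 (fun t => y (lo_ord t)) in
    let b := @mkout Y n' k./2 (fun t => y (hi_ord t)) in
    if odd k as bb return
       (if bb then (outT Y n' k./2 * outT Y n' k./2 * bool)%type
        else (outT Y n' k./2 * outT Y n' k./2)%type)
    then (a, b, false) else (a, b)
  end.

Arguments mkout {Y} n k.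

(* L_{V_N^{(i)}}(y_1^N) with N = 2^n, 1 <= i <= N *)
Definition LR (R : realFieldType) (Y : Type) (V : chan R Y) (n i : nat)
  (y : 'I_(2 ^ n) -> Y) : R :=
  LRc (synth V n i.-1) (mkout n i.-1 y).
Arguments LR {R Y} V n i y.

Definition ProbV (R : realFieldType) (Y : finType) (V : chan R Y) (n : nat)
  (E : {ffun 'I_(2 ^ n) -> Y} -> bool) : R :=
  \sum_(y : {ffun 'I_(2 ^ n) -> Y} | E y) \prod_(j < 2 ^ n) V false (y j).
Arguments ProbV {R Y} V n E.

Definition is_BDMC (R : realFieldType) (Y : finType) (V : chan R Y) : Prop :=
  (forall x y, 0 <= V x y) /\ (forall x, \sum_(y : Y) V x y = 1).

Definition symmetric_chan (R : realFieldType) (Y : finType) (V : chan R Y) : Prop :=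
  exists pi : Y -> Y, involutive pi /\ forall y, V true y = V false (pi y).

From HB Require Import structures.
From mathcomp Require Import all_boot all_order all_algebra.
From mathcomp Require Import ring lra zify.
Set Implicit Arguments. Unset Strict Implicit. Unset Printing Implicit Defensive.
Import Order.TTheory GRing.Theory Num.Theory.
Local Open Scope ring_scope.

(* Proof of Proposition 3.  For a channel W and an output y put
     D_W(y) = (W(y|1) - W(y|0)) / (W(y|1) + W(y|0)),
   so that L_W(y) > 1 iff D_W(y) > 0 and L_W(y) < 1 iff D_W(y) < 0.  Call a
   weight w and a value D on a finite set "balanced" when
   \sum w (1 + D) g(D) = 0 for every odd g; this says that the law of D under
   w is symmetric in the sense (1 - d) mu(-d) = (1 + d) mu(d).
   1. A symmetric B-DMC, weighted by V(.|0), is balanced (balanced_symmetric).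
   2. Balancedness is preserved by the two polarization rules on D-values,
      D^- = - D1 D2 and D^+ = (D1 + D2) / (1 + D1 D2) (balanced_minus,
      balanced_plus), which are exactly the D-values of V_{2N}^{(2i-1)} and
      V_{2N}^{(2i)} at (y_1^{2N}, 0) in terms of those of V_N^{(i)} on the two
      halves of y (tanhLR_joinf).  By induction every synthetic channel at the
      all-zero input is balanced (balanced_tanhLR).
   3. Taking g = sg gives \sum w sg(D) = - \sum w |D| <= 0, and the left-hand
      side is P_V[L > 1] - P_V[L < 1] (ProbV_gap).
   Hence P_V[L > 1] <= P_V[L < 1] for every synthetic channel of a symmetric
   channel (ProbV_LR_le). *)

Section Balanced.
Variable R : realFieldType.

Definition odd_fun (g : R -> R) := forall x, g (- x) = - g x.

(* The law of D under the (possibly unnormalized) weight w is symmetric. *)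
Definition balanced (A : finType) (w D : A -> R) :=
  forall g, odd_fun g -> \sum_a w a * (1 + D a) * g (D a) = 0.

Lemma balanced_ext (A : finType) (w w' D D' : A -> R) :
  w =1 w' -> (forall a, w a != 0 -> D a = D' a) -> balanced w D -> balanced w' D'.
Proof.
move=> ew eD bal g g_odd; rewrite -[RHS](bal g g_odd); apply: eq_bigr => a _.
by rewrite -ew; have [->|/eD->] := eqVneq (w a) 0; rewrite ?mul0r.
Qed.

Lemma balanced_reindex (A B : finType) (f : A -> B) (w D : B -> R) :
  bijective f -> balanced (w \o f) (D \o f) -> balanced w D.
Proof. by move=> bij_f bal g g_odd; rewrite (reindex f) ?bal //; exact: onW_bij. Qed.

Lemma balanced_sg (A : finType) (w D : A -> R) : balanced w D ->
  \sum_a w a * Num.sg (D a) = - \sum_a w a * `|D a|.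
Proof.
move=> bal; apply/eqP; rewrite -subr_eq0 opprK -big_split /=.
rewrite -[X in _ == X](bal _ (@sgrN _)); apply/eqP; apply: eq_bigr => a _; rewrite normrEsg; ring.
Qed.

Lemma balanced_sum_le0 (A : finType) (w D : A -> R) :
  (forall a, 0 <= w a) -> balanced w D -> \sum_a w a * Num.sg (D a) <= 0.
Proof.
move=> w_ge0 /balanced_sg ->; rewrite oppr_le0.
by apply: sumr_ge0 => a _; rewrite mulr_ge0.
Qed.

(* Addition law of tanh: the D-value combination at a variable node. *)
Definition tanh_add (x y : R) := (x + y) / (1 + x * y).

Lemma odd_fun0 g : odd_fun g -> g 0 = 0.
Proof. by move=> g_odd; have := g_odd 0; rewrite oppr0 => e; lra. Qed.

(* (1 + D^+) factors through (1 + x)(1 + y); when 1 + x y = 0 both sides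
   vanish since tanh_add x y = 0 in the field convention x / 0 = 0. *)
Lemma tanh_add_kernel g x y : odd_fun g ->
  (1 + tanh_add x y) * g (tanh_add x y)
  = (1 + x) * (1 + y) * (g (tanh_add x y) / (1 + x * y)).
Proof.
move=> g_odd; rewrite /tanh_add; have [e|nz] := eqVneq (1 + x * y) 0.
  by rewrite e invr0 !mulr0 addr0 mul1r (odd_fun0 g_odd).
by field.
Qed.

Section Pair.
Variables (A B : finType) (wa Da : A -> R) (wb Db : B -> R).
Hypotheses (balA : balanced wa Da) (balB : balanced wb Db).

Lemma sum_pair (F : A * B -> R) : \sum_p F p = \sum_a \sum_b F (a, b).
Proof. by rewrite pair_bigA; apply: eq_bigr => -[]. Qed.

Lemma sum_odd_l (c : B -> R) (G : R -> R -> R) : (forall x y, G (- x) y = - G x y) ->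
  \sum_a \sum_b wa a * (1 + Da a) * c b * G (Da a) (Db b) = 0.
Proof.
move=> G_odd; rewrite exchange_big /=; apply: big1 => b _.
transitivity (c b * \sum_a wa a * (1 + Da a) * G (Da a) (Db b)).
  by rewrite mulr_sumr; apply: eq_bigr => a _; ring.
by rewrite (balA (g := G^~ (Db b))) ?mulr0 // => x; exact: G_odd.
Qed.

Lemma sum_odd_r (c : A -> R) (G : R -> R -> R) : (forall x y, G x (- y) = - G x y) ->
  \sum_a \sum_b c a * (wb b * (1 + Db b)) * G (Da a) (Db b) = 0.
Proof.
move=> G_odd; apply: big1 => a _.
transitivity (c a * \sum_b wb b * (1 + Db b) * G (Da a) (Db b)).
  by rewrite mulr_sumr; apply: eq_bigr => b _; ring.
by rewrite (balB (g := G (Da a))) ?mulr0 // => y; exact: G_odd.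
Qed.

(* Check-node rule: (1 - x y) = (1 + x) - x (1 + y) splits the sum into two
   kernels odd in x resp. in y. *)
Lemma balanced_minus :
  balanced (fun p : A * B => wa p.1 * wb p.2) (fun p => - (Da p.1 * Db p.2)).
Proof.
move=> g g_odd; rewrite sum_pair /=.
pose G x y := g (- (x * y)).
have GoddL x y : G (- x) y = - G x y by rewrite /G mulNr opprK -g_odd opprK.
have GoddR x y : G x (- y) = - G x y by rewrite /G mulrN opprK -g_odd opprK.
transitivity ((\sum_a \sum_b wa a * (1 + Da a) * wb b * G (Da a) (Db b))
  - \sum_a \sum_b wa a * Da a * (wb b * (1 + Db b)) * G (Da a) (Db b)).
  rewrite -sumrB; apply: eq_bigr => a _; rewrite -sumrB; apply: eq_bigr => b _.
  by rewrite /G; ring.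
by rewrite (sum_odd_l _ GoddL) (sum_odd_r _ GoddR) subr0.
Qed.

(* Variable-node rule: after tanh_add_kernel, split the jointly odd kernel H
   into a part odd in x and a part odd in y. *)
Lemma balanced_plus :
  balanced (fun p : A * B => wa p.1 * wb p.2) (fun p => tanh_add (Da p.1) (Db p.2)).
Proof.
move=> g g_odd; rewrite sum_pair /=.
pose H x y := g (tanh_add x y) / (1 + x * y).
have H_odd x y : H (- x) (- y) = - H x y.
  by rewrite /H /tanh_add mulrNN -opprD mulNr g_odd mulNr.
pose H1 x y := (H x y - H (- x) y) / 2.
pose H2 x y := (H x y + H (- x) y) / 2.
have H1odd x y : H1 (- x) y = - H1 x y by rewrite /H1 opprK; field.
have H2odd x y : H2 x (- y) = - H2 x y.
  by rewrite /H2 -[in H x (- y)](opprK x) !H_odd; field.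
transitivity ((\sum_a \sum_b wa a * (1 + Da a) * (wb b * (1 + Db b)) * H1 (Da a) (Db b))
  + \sum_a \sum_b wa a * (1 + Da a) * (wb b * (1 + Db b)) * H2 (Da a) (Db b)).
  rewrite -big_split; apply: eq_bigr => a _; rewrite -big_split; apply: eq_bigr => b _ /=.
  by rewrite -mulrA tanh_add_kernel // -/(H _ _) /H1 /H2; field.
by rewrite (sum_odd_l _ H1odd) (sum_odd_r _ H2odd) addr0.
Qed.
End Pair.
End Balanced.

Section Ratio.
Variable R : realFieldType.

Definition dratio (x1 x0 : R) := (x1 - x0) / (x1 + x0).

Lemma dratio_swap (x1 x0 : R) : dratio x0 x1 = - dratio x1 x0.
Proof. by rewrite /dratio -mulNr opprB [x1 + x0]addrC. Qed.

Lemma dratio_minus (x1 x0 y1 y0 : R) : 0 < x0 -> 0 <= x1 -> 0 < y0 -> 0 <= y1 ->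
  dratio (2^-1 * x0 * y1 + 2^-1 * x1 * y0) (2^-1 * x1 * y1 + 2^-1 * x0 * y0)
  = - (dratio x1 x0 * dratio y1 y0).
Proof.
move=> x0_gt0 x1_ge0 y0_gt0 y1_ge0; rewrite /dratio.
have x_nz : x1 + x0 != 0 by rewrite gt_eqF //; lra.
have y_nz : y1 + y0 != 0 by rewrite gt_eqF //; lra.
have -> : 2^-1 * x0 * y1 + 2^-1 * x1 * y0 + (2^-1 * x1 * y1 + 2^-1 * x0 * y0)
   = 2^-1 * ((x1 + x0) * (y1 + y0)) by ring.
by field; rewrite x_nz y_nz.
Qed.

Lemma dratio_plus (x1 x0 y1 y0 : R) : 0 < x0 -> 0 <= x1 -> 0 < y0 -> 0 <= y1 ->
  dratio (2^-1 * x1 * y1) (2^-1 * x0 * y0) = tanh_add (dratio x1 x0) (dratio y1 y0).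
Proof.
move=> x0_gt0 x1_ge0 y0_gt0 y1_ge0; rewrite /dratio /tanh_add.
have x_nz : x1 + x0 != 0 by rewrite gt_eqF //; lra.
have y_nz : y1 + y0 != 0 by rewrite gt_eqF //; lra.
have xy_nz : x1 * y1 + x0 * y0 != 0 by rewrite gt_eqF //; nra.
have -> : 1 + (x1 - x0) / (x1 + x0) * ((y1 - y0) / (y1 + y0))
    = 2 * (x1 * y1 + x0 * y0) / ((x1 + x0) * (y1 + y0)) by field; rewrite x_nz y_nz.
by field; rewrite x_nz y_nz xy_nz.
Qed.

Lemma dratio_sg (x1 x0 : R) : 0 < x0 -> 0 <= x1 ->
  Num.sg (dratio x1 x0) = (1 < x1 / x0)%R%:R - (x1 / x0 < 1)%R%:R.
Proof.
move=> x0_gt0 x1_ge0; rewrite ltr_pdivlMr // ltr_pdivrMr // !mul1r.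
rewrite /dratio sgrM sgrV (gtr0_sg (x := x1 + x0)) ?mulr1; last by lra.
case: ltrgtP => h; last by rewrite h subrr sgr0 subrr.
  by rewrite gtr0_sg ?subr0 // subr_gt0.
by rewrite ltr0_sg ?sub0r // subr_lt0.
Qed.

(* Base case: the output involution pi exchanges the summands at y and pi y
   up to sign, so the sum is its own opposite. *)
Lemma balanced_symmetric (Y : finType) (V : chan R Y) (pi : Y -> Y) :
  involutive pi -> (forall y, V true y = V false (pi y)) ->
  balanced (V false) (fun y => dratio (V true y) (V false y)).
Proof.
move=> pi_inv V_pi g g_odd.
pose c y := V false y * (1 + dratio (V true y) (V false y)) * g (dratio (V true y) (V false y)).
have c_pi y : c (pi y) = - c y.
  have V_true_pi : V true (pi y) = V false y by rewrite V_pi pi_inv.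
  rewrite /c V_true_pi -V_pi dratio_swap g_odd.
  have [s0|s_nz] := eqVneq (V true y + V false y) 0.
    have d0 : dratio (V true y) (V false y) = 0 by rewrite /dratio s0 invr0 mulr0.
    by rewrite d0 (odd_fun0 g_odd) oppr0 !mulr0 oppr0.
  by rewrite /dratio; field.
have : \sum_y c y = - \sum_y c y.
  by rewrite [LHS](reindex_inj (can_inj pi_inv)) -sumrN; apply: eq_bigr => y _; exact: c_pi.
by move=> e; lra.
Qed.
End Ratio.

Section Halves.
Variable Y : finType.

Lemma mkout_ext n k (f g : 'I_(2 ^ n) -> Y) : f =1 g -> mkout n k f = mkout n k g.
Proof.
elim: n k f g => [|n IH] k f g fg /=; first exact: fg.
rewrite (IH _ (fun t => f (lo_ord t)) (fun t => g (lo_ord t))) => [|t]; last exact: fg.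
by rewrite (IH _ (fun t => f (hi_ord t)) (fun t => g (hi_ord t))) // => t; exact: fg.
Qed.

Lemma exp2S n : (2 ^ n.+1 = 2 ^ n + 2 ^ n)%N.
Proof. by rewrite expnS mul2n addnn. Qed.

Definition joinf n (a b : {ffun 'I_(2 ^ n) -> Y}) : {ffun 'I_(2 ^ n.+1) -> Y} :=
  [ffun t => match split (cast_ord (exp2S n) t) with inl i => a i | inr j => b j end].

Lemma joinf_lo n a b t : @joinf n a b (lo_ord t) = a t.
Proof.
rewrite ffunE; case: splitP => [i /= Hi|j /= Hj]; first by congr (a _); apply: val_inj.
by have := ltn_ord t; rewrite Hj; lia.
Qed.

Lemma joinf_hi n a b t : @joinf n a b (hi_ord t) = b t.
Proof.
rewrite ffunE; case: splitP => [i /= Hi|j /= Hj]; last by congr (b _); apply: val_inj => /=; lia.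
by have := ltn_ord i; rewrite -Hi; lia.
Qed.

Lemma joinf_bij n : bijective (fun p => @joinf n p.1 p.2).
Proof.
exists (fun y : {ffun 'I_(2 ^ n.+1) -> Y} =>
  ([ffun t => y (lo_ord t)], [ffun t => y (hi_ord t)])) => [[a b]|y] /=.
  by congr pair; apply/ffunP => t; rewrite ffunE ?joinf_lo ?joinf_hi.
apply/ffunP => t; rewrite ffunE; case: splitP => [i /= Hi|j /= Hj]; rewrite ffunE;
  by congr (y _); apply: val_inj => /=; lia.
Qed.

Lemma prod_joinf (R : comNzRingType) n (f : Y -> R) a b :
  \prod_(t < 2 ^ n.+1) f (@joinf n a b t)
  = (\prod_(t < 2 ^ n) f (a t)) * \prod_(t < 2 ^ n) f (b t).
Proof.
have cast_bij : bijective (cast_ord (esym (exp2S n))).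
  by exists (cast_ord (exp2S n)) => t; rewrite ?cast_ordK ?cast_ordKV.
rewrite (reindex _ (onW_bij _ cast_bij)) big_split_ord /=.
congr (_ * _); apply: eq_bigr => t _; [rewrite -(joinf_lo a b) | rewrite -(joinf_hi a b)];
  by congr (f (joinf a b _)); apply: val_inj => /=; lia.
Qed.
End Halves.

Section Synthetic.
Variables (R : realFieldType) (Y : finType) (V : chan R Y).
Hypothesis V_ge0 : forall x y, 0 <= V x y.

Lemma synth_ge0 n k u t : 0 <= synth V n k u t.
Proof.
elim: n k u t => [|n IH] k u t /=; first exact: V_ge0.
move: t; rewrite /=; case: (odd k) => t.
  by rewrite /plus_chan !mulr_ge0 // invr_ge0.
by rewrite /minus_chan; apply: sumr_ge0 => v _; rewrite !mulr_ge0 // invr_ge0.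
Qed.

Lemma synth_mkout_gt0 n k (y : 'I_(2 ^ n) -> Y) : (forall j, 0 < V false (y j)) ->
  0 < synth V n k false (mkout n k y).
Proof.
elim: n k y => [|n IH] k y y_gt0 /=; first exact: y_gt0.
have lo_gt0 := IH k./2 (fun t => y (lo_ord t)) (fun t => y_gt0 _).
have hi_gt0 := IH k./2 (fun t => y (hi_ord t)) (fun t => y_gt0 _).
case: (odd k); first by rewrite /plus_chan /= !mulr_gt0 // invr_gt0.
rewrite /minus_chan big_bool /= ltr_wpDl ?mulr_gt0 ?invr_gt0 //.
by rewrite !mulr_ge0 ?invr_ge0 ?synth_ge0.
Qed.

Definition weight n (y : {ffun 'I_(2 ^ n) -> Y}) := \prod_(j < 2 ^ n) V false (y j).

Definition Wout n k u (y : {ffun 'I_(2 ^ n) -> Y}) := synth V n k u (mkout n k y).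

Definition tanhLR n k (y : {ffun 'I_(2 ^ n) -> Y}) := dratio (Wout k true y) (Wout k false y).

Lemma weight_joinf n (a b : {ffun 'I_(2 ^ n) -> Y}) : weight (joinf a b) = weight a * weight b.
Proof. exact: prod_joinf. Qed.

Lemma Wout_gt0 n k y : weight y != 0 -> 0 < @Wout n k false y.
Proof.
move=> /prodf_neq0 y_nz; apply: synth_mkout_gt0 => j.
by rewrite lt0r y_nz ?V_ge0.
Qed.

Lemma Wout_joinf n k u a b : Wout k u (@joinf _ n a b) =
  if odd k then 2^-1 * Wout k./2 u a * Wout k./2 u b
  else 2^-1 * Wout k./2 (~~ u) a * Wout k./2 true b + 2^-1 * Wout k./2 u a * Wout k./2 false b.
Proof.
rewrite /Wout /= (mkout_ext _ (joinf_lo a b)) (mkout_ext _ (joinf_hi a b)).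
case: (odd k) => //; rewrite /minus_chan big_bool /=.
by rewrite addbT addbF.
Qed.

Lemma tanhLR_joinf n k a b : weight a != 0 -> weight b != 0 ->
  tanhLR k (@joinf _ n a b) = if odd k then tanh_add (tanhLR k./2 a) (tanhLR k./2 b)
                              else - (tanhLR k./2 a * tanhLR k./2 b).
Proof.
move=> a_nz b_nz; rewrite /tanhLR !Wout_joinf.
have := Wout_gt0 k./2 a_nz; have := Wout_gt0 k./2 b_nz.
have := @synth_ge0 n k./2 true (mkout n k./2 a); have := @synth_ge0 n k./2 true (mkout n k./2 b).
case: (odd k) => *; [exact: dratio_plus | exact: dratio_minus].
Qed.

Lemma ProbV_gap n j :
  ProbV V n (fun y => 1 < LR V n j y) - ProbV V n (fun y => LR V n j y < 1)
  = \sum_(y : {ffun 'I_(2 ^ n) -> Y}) weight y * Num.sg (tanhLR j.-1 y).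
Proof.
rewrite /ProbV !(big_mkcond (fun y => _ < _)) -sumrB; apply: eq_bigr => y _.
rewrite -/(weight y); have [->|w_nz] := eqVneq (weight y) 0.
  by rewrite mul0r !if_same subr0.
rewrite /tanhLR dratio_sg ?Wout_gt0 ?synth_ge0 //.
by rewrite /LR /LRc; case: (_ < _); case: (_ < _); rewrite ?subrr ?mulr0 ?subr0 ?mulr1 ?sub0r ?mulrN1.
Qed.
End Synthetic.

Section Symmetric.
Variables (R : realFieldType) (Y : finType) (V : chan R Y) (pi : Y -> Y).
Hypotheses (V_ge0 : forall x y, 0 <= V x y) (pi_inv : involutive pi)
  (V_pi : forall y, V true y = V false (pi y)).

Lemma balanced_tanhLR0 k : balanced (@weight _ _ V 0) (tanhLR V k).
Proof.
have const_bij : bijective (fun x : Y => [ffun _ : 'I_(2 ^ 0) => x]).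
  exists (fun y : {ffun 'I_(2 ^ 0) -> Y} => y ord0) => [x|y]; first by rewrite ffunE.
  by apply/ffunP => t; rewrite ffunE (ord1 t).
apply: (balanced_reindex const_bij).
apply: balanced_ext (balanced_symmetric pi_inv V_pi) => [x|x _] /=.
  by rewrite /weight big_ord1 ffunE.
by rewrite /tanhLR /Wout /= ffunE.
Qed.

Lemma balanced_tanhLR n k : balanced (@weight _ _ V n) (tanhLR V k).
Proof.
elim: n k => [|n IH] k; first exact: balanced_tanhLR0.
pose halves := ({ffun 'I_(2 ^ n) -> Y} * {ffun 'I_(2 ^ n) -> Y})%type.
have bal_pair : balanced (fun p : halves => weight V p.1 * weight V p.2) (fun p =>
    if odd k then tanh_add (tanhLR V k./2 p.1) (tanhLR V k./2 p.2)
    else - (tanhLR V k./2 p.1 * tanhLR V k./2 p.2)).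
  by case: (odd k); [exact: balanced_plus (IH _) (IH _) | exact: balanced_minus (IH _) (IH _)].
apply: (balanced_reindex (joinf_bij Y n) (balanced_ext _ _ bal_pair)) => [[a b]|[a b]] /=.
  by rewrite weight_joinf.
by rewrite mulf_eq0 negb_or => /andP[a_nz b_nz]; rewrite tanhLR_joinf.
Qed.

Lemma ProbV_LR_le n j :
  ProbV V n (fun y => 1 < LR V n j y) <= ProbV V n (fun y => LR V n j y < 1).
Proof.
rewrite -subr_le0 ProbV_gap //; apply: balanced_sum_le0 (balanced_tanhLR n _) => y.
exact: prodr_ge0.
Qed.
End Symmetric.

Unset Implicit Arguments.

Theorem proposition3 (R : realFieldType) (Y : finType) (V : chan R Y)
  (hV : is_BDMC V) (hsym : symmetric_chan V) (n i : nat)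
  (hi : (1 <= i <= 2 ^ n)%N)
  (hyp : ProbV V n (fun y => 1 < LR V n i y) <= ProbV V n (fun y => LR V n i y < 1)) :
  forall j : nat, (j = 2 * i - 1)%N \/ (j = 2 * i)%N ->
    ProbV V n.+1 (fun y : {ffun 'I_(2 ^ n.+1) -> Y} => 1 < LR V n.+1 j y)
      <= ProbV V n.+1 (fun y : {ffun 'I_(2 ^ n.+1) -> Y} => LR V n.+1 j y < 1).
Proof.
move=> j _; case: hV => V_ge0 _; case: hsym => pi [pi_inv V_pi].
exact: (ProbV_LR_le V_ge0 pi_inv V_pi n.+1 j).
Qed.
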